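(* Let $F\subseteq\mathbb{R}^2$ be a self-similar set generated by an IFS $\Phi$ of contracting similarities satisfying the strong separation condition. Then $\dim_H(F\cap L)<1$ for every affine line $L\subseteq\mathbb{R}^2$.
   Context: SSC: the first-level cylinders $\phi_i(F)$ are pairwise disjoint. *)

From Stdlib Require Import Reals.
Open Scope R_scope.

Definition pt : Type := (R * R)%type.

Definition dist2 (p q : pt) : R :=
  sqrt (Rsqr (fst p - fst q) + Rsqr (snd p - snd q)).

Definition contracting_similarity (f : pt -> pt) (r : R) : Prop :=
  0 < r < 1 /\ forall p q, dist2 (f p) (f q) = r * dist2 p q.

Definition seq_compact (A : pt -> Prop) : Prop :=
  forall u : nat -> pt, (forall k, A (u k)) ->
  exists (g : nat -> nat) (l : pt),
    (forall k, (g k < g (S k))%nat) /\ A l /\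
    (forall eps, 0 < eps -> exists N, forall k, (N <= k)%nat -> dist2 (u (g k)) l < eps).

Definition is_attractor (n : nat) (phi : nat -> pt -> pt) (F : pt -> Prop) : Prop :=
  (exists p, F p) /\ seq_compact F /\
  (forall p, F p <-> exists i, (i < n)%nat /\ exists q, F q /\ p = phi i q).

Definition SSC (n : nat) (phi : nat -> pt -> pt) (F : pt -> Prop) : Prop :=
  forall i j, (i < n)%nat -> (j < n)%nat -> i <> j ->
  forall p q, F p -> F q -> phi i p <> phi j q.

Definition affine_line (a v : pt) : pt -> Prop :=
  fun p => exists t : R, p = (fst a + t * fst v, snd a + t * snd v).

Definition hausdorff_null (s : R) (A : pt -> Prop) : Prop :=
  forall delta eps, 0 < delta -> 0 < eps ->
  exists (U : nat -> pt -> Prop) (d : nat -> R),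
    (forall p, A p -> exists k, U k p) /\
    (forall k, 0 < d k <= delta) /\
    (forall k p q, U k p -> U k q -> dist2 p q <= d k) /\
    (forall N, sum_f_R0 (fun k => Rpower (d k) s) N <= eps).

Definition is_hausdorff_dim (A : pt -> Prop) (d : R) : Prop :=
  (forall s, 0 <= s -> hausdorff_null s A -> d <= s) /\
  (forall e, (forall s, 0 <= s -> hausdorff_null s A -> e <= s) -> e <= d).

(* The strong separation condition puts the first-level cylinders [phi_i(F)] a positive
   distance [d] apart, hence the cylinders of a word [w] at distance [r_w d].  A segment in
   [F] therefore cannot leave the cylinder containing its endpoint, and pulling it back
   through [phi_i] yields a segment of length [l / r_i]; iterating contradicts the
   boundedness of [F], so [F] contains no segment.  By compactness this becomes uniform: an
   isometric copy in [F] of any subset of [[0, d]] misses an interval of fixed length [c].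
   Transported through a cylinder of diameter comparable to [rho], this shows that [F ∩ L]
   is porous on [L]: around each of its points, every window of radius [rho] contains a gap
   of length proportional to [rho].  Cutting intervals into [K] equal pieces, one piece
   always misses [F ∩ L], so [F ∩ L] is covered by [M (K-1)^k] intervals of length
   [lam K^(-k)], and [H^s(F ∩ L) = 0] for some [s < 1]. *)

From Stdlib Require Import Reals Lra Lia List Classical ClassicalEpsilon IndefiniteDescription.
Open Scope R_scope.

(** * Distances in the plane *)

Lemma dist2_ge0 p q : 0 <= dist2 p q.
Proof. apply sqrt_pos. Qed.

Lemma dist2_mul_self p q :
  dist2 p q * dist2 p q = Rsqr (fst p - fst q) + Rsqr (snd p - snd q).
Proof. apply sqrt_sqrt, Rplus_le_le_0_compat; apply Rle_0_sqr. Qed.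

Lemma dist2_sym p q : dist2 p q = dist2 q p.
Proof. unfold dist2; f_equal; unfold Rsqr; ring. Qed.

Lemma dist2_eq0 p q : dist2 p q = 0 -> p = q.
Proof.
  intros H; pose proof (dist2_mul_self p q) as E; rewrite H in E.
  destruct p as [p1 p2], q as [q1 q2]; simpl in E.
  pose proof (Rle_0_sqr (p1 - q1)); pose proof (Rle_0_sqr (p2 - q2)).
  assert (E1 : Rsqr (p1 - q1) = 0) by lra. assert (E2 : Rsqr (p2 - q2) = 0) by lra.
  apply Rsqr_0_uniq in E1, E2. f_equal; lra.
Qed.

Lemma dist2_triangle p q r : dist2 p r <= dist2 p q + dist2 q r.
Proof.
  pose proof (dist2_mul_self p q); pose proof (dist2_mul_self q r); pose proof (dist2_mul_self p r).
  pose proof (dist2_ge0 p q); pose proof (dist2_ge0 q r); pose proof (dist2_ge0 p r).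
  destruct p as [p1 p2], q as [q1 q2], r as [r1 r2]; simpl in *; unfold Rsqr in *.
  set (a := dist2 (p1, p2) (q1, q2)) in *; set (b := dist2 (q1, q2) (r1, r2)) in *.
  (* Cauchy-Schwarz for the two difference vectors *)
  assert (CS : (p1 - q1) * (q1 - r1) + (p2 - q2) * (q2 - r2) <= a * b).
  { apply Rsqr_incr_0_var; [unfold Rsqr | nra].
    replace (a * b * (a * b)) with (a * a * (b * b)) by ring.
    pose proof (Rle_0_sqr ((p1 - q1) * (q2 - r2) - (p2 - q2) * (q1 - r1))); unfold Rsqr in *; nra. }
  apply Rsqr_incr_0_var; unfold Rsqr; nra.
Qed.

Lemma dist2_between p y q : dist2 p y + dist2 y q = dist2 p q -> 0 < dist2 p q ->
  y = (fst p + dist2 p y / dist2 p q * (fst q - fst p),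
       snd p + dist2 p y / dist2 p q * (snd q - snd p)).
Proof.
  intros H Hc.
  pose proof (dist2_mul_self p y) as E1; pose proof (dist2_mul_self y q) as E2;
  pose proof (dist2_mul_self p q) as E3.
  destruct p as [p1 p2], q as [q1 q2], y as [y1 y2]; simpl in *; unfold Rsqr in *.
  set (A := dist2 (p1, p2) (y1, y2)) in *; set (B := dist2 (y1, y2) (q1, q2)) in *;
  set (C := dist2 (p1, p2) (q1, q2)) in *.
  set (u1 := y1 - p1); set (u2 := y2 - p2); set (w1 := q1 - y1); set (w2 := q2 - y2).
  assert (E1' : A * A = u1 * u1 + u2 * u2) by (rewrite E1; unfold u1, u2; ring).
  assert (E2' : B * B = w1 * w1 + w2 * w2) by (rewrite E2; unfold w1, w2; ring).
  assert (E3' : C * C = (u1 + w1) * (u1 + w1) + (u2 + w2) * (u2 + w2))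
    by (rewrite E3; unfold u1, u2, w1, w2; ring).
  assert (Hdot : u1 * w1 + u2 * w2 = A * B) by (rewrite <- H in E3'; nra).
  (* the vectors B u and A w coincide *)
  assert (Z : Rsqr (B * u1 - A * w1) + Rsqr (B * u2 - A * w2) = 0).
  { unfold Rsqr.
    replace ((B * u1 - A * w1) * (B * u1 - A * w1) + (B * u2 - A * w2) * (B * u2 - A * w2))
      with (B * B * (u1 * u1 + u2 * u2) + A * A * (w1 * w1 + w2 * w2)
            - 2 * A * B * (u1 * w1 + u2 * w2)) by ring.
    rewrite Hdot, <- E1', <- E2'; ring. }
  pose proof (Rle_0_sqr (B * u1 - A * w1)); pose proof (Rle_0_sqr (B * u2 - A * w2)).
  assert (Z1 : Rsqr (B * u1 - A * w1) = 0) by lra; assert (Z2 : Rsqr (B * u2 - A * w2) = 0) by lra.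
  apply Rsqr_0_uniq in Z1, Z2.
  assert (F1 : C * u1 = A * (u1 + w1)) by (rewrite <- H; nra).
  assert (F2 : C * u2 = A * (u2 + w2)) by (rewrite <- H; nra).
  unfold u1, u2, w1, w2 in *; f_equal; apply (Rmult_eq_reg_l C); try lra;
    field_simplify; try lra; nra.
Qed.

Definition line_pt (a v : pt) (t : R) : pt := (fst a + t * fst v, snd a + t * snd v).

Definition norm2 (v : pt) : R := sqrt (Rsqr (fst v) + Rsqr (snd v)).

Lemma norm2_gt0 v : v <> (0, 0) -> 0 < norm2 v.
Proof.
  intros Hv; apply sqrt_lt_R0; destruct v as [v1 v2]; simpl.
  destruct (Req_dec v1 0), (Req_dec v2 0); subst; try congruence; unfold Rsqr; nra.
Qed.

Lemma dist2_line_pt a v s t : dist2 (line_pt a v s) (line_pt a v t) = Rabs (s - t) * norm2 v.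
Proof.
  unfold dist2, norm2, line_pt; simpl.
  replace (Rsqr (fst a + s * fst v - (fst a + t * fst v))
           + Rsqr (snd a + s * snd v - (snd a + t * snd v)))
    with (Rsqr (s - t) * (Rsqr (fst v) + Rsqr (snd v))) by (unfold Rsqr; ring).
  rewrite sqrt_mult_alt, sqrt_Rsqr_abs by apply Rle_0_sqr; reflexivity.
Qed.

Lemma Rabs_le_inv x z : Rabs x <= z -> -z <= x <= z.
Proof.
  intros H; pose proof (Rle_abs x); pose proof (Rle_abs (- x)); rewrite Rabs_Ropp in *; lra.
Qed.

Lemma Rabs_dist_approx s t x y e : Rabs (s - x) <= e -> Rabs (t - y) <= e ->
  Rabs (Rabs (s - t) - Rabs (x - y)) <= 2 * e.
Proof.
  intros Hs Ht; eapply Rle_trans; [apply Rabs_triang_inv2|].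
  replace (s - t - (x - y)) with ((s - x) + - (t - y)) by ring.
  eapply Rle_trans; [apply Rabs_triang|]; rewrite Rabs_Ropp; lra.
Qed.

Lemma Req_of_Rabs_small x y : (forall e, 0 < e -> Rabs (x - y) < e) -> x = y.
Proof.
  intros H; destruct (Req_dec x y) as [|Hxy]; [assumption|].
  specialize (H _ (Rabs_pos_lt _ (Rminus_eq_contra _ _ Hxy))); lra.
Qed.

Lemma div_succ_small l e : 0 <= l -> 0 < e -> exists N, forall k, (N <= k)%nat -> l / INR (S k) < e.
Proof.
  intros Hl He; destruct (INR_unbounded (l / e)) as [N HN]; exists N; intros k Hk.
  apply le_INR in Hk; rewrite S_INR.
  apply (Rmult_lt_reg_r (INR k + 1)); [pose proof (pos_INR k); lra|].
  unfold Rdiv in *; rewrite Rmult_assoc, Rinv_l, Rmult_1_r by (pose proof (pos_INR k); lra).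
  apply (Rmult_lt_compat_r e) in HN; [|exact He].
  rewrite Rmult_assoc, Rinv_l, Rmult_1_r in HN by lra; nra.
Qed.

Lemma dense_window_approx (A : R -> Prop) l c t : 0 < c <= l ->
  (forall al, 0 <= al -> al + c <= l -> exists s, al <= s <= al + c /\ A s) ->
  0 <= t <= l -> exists s, A s /\ Rabs (s - t) <= c.
Proof.
  intros Hc Hdense Ht.
  assert (Hal : 0 <= Rmax 0 (t - c) /\ t - c <= Rmax 0 (t - c) /\
                (Rmax 0 (t - c) = 0 \/ Rmax 0 (t - c) = t - c))
    by (unfold Rmax; destruct (Rle_dec 0 (t - c)); lra).
  destruct (Hdense (Rmax 0 (t - c))) as [s [Hs HAs]];
    [lra | destruct Hal as (_ & _ & [-> | ->]); lra |].
  exists s; split; [exact HAs | apply Rabs_le; lra].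
Qed.

Lemma partial_choice {A B : Type} (b : B) (P : A -> Prop) (Q : A -> B -> Prop) :
  (forall x, P x -> exists y, Q x y) -> exists f : A -> B, forall x, P x -> Q x (f x).
Proof.
  intros H; exists (fun x => epsilon (inhabits b) (Q x)).
  intros x Hx; apply epsilon_spec, H, Hx.
Qed.

Lemma uniform_pos_bound (Q : nat -> R -> Prop) N :
  (forall i d d', Q i d -> 0 < d' <= d -> Q i d') ->
  (forall i, (i < N)%nat -> exists d, 0 < d /\ Q i d) ->
  exists d, 0 < d /\ forall i, (i < N)%nat -> Q i d.
Proof.
  intros Hmono; induction N as [|N IH]; intros H.
  - exists 1; split; [lra | intros; lia].
  - destruct IH as [d1 [Hd1 H1]]; [intros; apply H; lia|].
    destruct (H N) as [d2 [Hd2 H2]]; [lia|].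
    pose proof (Rmin_l d1 d2); pose proof (Rmin_r d1 d2); pose proof (Rmin_glb_lt _ _ _ Hd1 Hd2).
    exists (Rmin d1 d2); split; [assumption|]; intros i Hi.
    destruct (Nat.eq_dec i N) as [->|]; [apply (Hmono _ d2) | apply (Hmono _ d1)]; auto; try lra.
    apply H1; lia.
Qed.

Lemma subdivision_locate x h M t : 0 < h -> x <= t <= x + INR (S M) * h ->
  exists j, (j <= M)%nat /\ x + INR j * h <= t <= x + INR (S j) * h.
Proof.
  intros Hh; induction M as [|M IH]; intros Ht.
  - exists 0%nat; split; [lia|]; simpl in *; lra.
  - destruct (Rle_dec t (x + INR (S M) * h)).
    + destruct IH as [j [Hj H]]; [lra|]; exists j; split; [lia | assumption].
    + exists (S M); split; [lia | lra].
Qed.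

Lemma pow_lt1_eventually_small x A e : 0 <= x < 1 -> 0 < e ->
  exists N, forall k, (N <= k)%nat -> A * x ^ k < e.
Proof.
  intros Hx He.
  destruct (pow_lt_1_zero x ltac:(rewrite Rabs_pos_eq; lra) (e / (Rabs A + 1)))
    as [N HN]; [apply Rdiv_lt_0_compat; pose proof (Rabs_pos A); lra|].
  exists N; intros k Hk; specialize (HN k Hk).
  pose proof (pow_le x k (proj1 Hx)); rewrite Rabs_pos_eq in HN by assumption.
  pose proof (Rabs_pos A); pose proof (Rle_abs A).
  apply (Rmult_lt_compat_l (Rabs A + 1)) in HN; [|lra].
  replace ((Rabs A + 1) * (e / (Rabs A + 1))) with e in HN by (field; lra); nra.
Qed.

Lemma Rpower_gt0 x s : 0 < Rpower x s.
Proof. apply exp_pos. Qed.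

Lemma Rpower_pow_l x m s : 0 < x -> Rpower (x ^ m) s = Rpower x s ^ m.
Proof.
  intros Hx; rewrite <- (Rpower_pow m x Hx), Rpower_mult, Rmult_comm, <- Rpower_mult.
  apply Rpower_pow, Rpower_gt0.
Qed.

Lemma sum_indicator_le L N : sum_f_R0 (fun m => if Nat.ltb m L then 1 else 0) N <= INR L.
Proof.
  assert (Hsum : sum_f_R0 (fun m => if Nat.ltb m L then 1 else 0) N = INR (Nat.min (S N) L)).
  { induction N as [|N IH]; [simpl; destruct L; reflexivity|].
    simpl sum_f_R0; rewrite IH; destruct (Nat.ltb_spec (S N) L).
    - rewrite (Nat.min_l (S N) L), (Nat.min_l (S (S N)) L), (S_INR (S N)) by lia; ring.
    - rewrite (Nat.min_r (S (S N)) L), (Nat.min_r (S N) L) by lia; ring. }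
  rewrite Hsum; apply le_INR; lia.
Qed.

Lemma sum_geom_le q N : 0 <= q < 1 -> sum_f_R0 (fun m => q ^ m) N <= / (1 - q).
Proof.
  intros Hq; rewrite tech3 by lra; pose proof (pow_le q (S N) (proj1 Hq)).
  unfold Rdiv; rewrite <- (Rmult_1_l (/ (1 - q))) at 2.
  apply Rmult_le_compat_r; [left; apply Rinv_0_lt_compat|]; lra.
Qed.

Lemma Rpower_half_lt1 s : 0 < s -> 0 < Rpower (1 / 2) s < 1.
Proof.
  intros Hs; split; [apply Rpower_gt0|]; unfold Rpower.
  apply Rlt_le_trans with (exp 0); [apply exp_increasing | rewrite exp_0; lra].
  assert (ln (1 / 2) < 0) by (rewrite <- ln_1; apply ln_increasing; lra); nra.
Qed.

Lemma subdivision_exponent K : 2 <= K -> exists s, 0 < s < 1 /\ (K - 1) * Rpower (/ K) s < 1.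
Proof.
  intros HK.
  assert (HlnK : 0 < ln K) by (rewrite <- ln_1; apply ln_increasing; lra).
  assert (HlnK1 : 0 <= ln (K - 1)).
  { destruct (Req_dec (K - 1) 1) as [->|]; [rewrite ln_1; lra|].
    rewrite <- ln_1; left; apply ln_increasing; lra. }
  assert (HlnKK : ln (K - 1) < ln K) by (apply ln_increasing; lra).
  exists ((1 + ln (K - 1) / ln K) / 2); split.
  - assert (0 <= ln (K - 1) / ln K < 1); [|lra].
    split; [unfold Rdiv; apply Rmult_le_pos; [lra | left; apply Rinv_0_lt_compat; lra]|].
    apply (Rmult_lt_reg_r (ln K)); [lra|]; field_simplify; lra.
  - unfold Rpower; rewrite ln_Rinv by lra.
    rewrite <- (exp_ln (K - 1)) at 1 by lra; rewrite <- exp_plus.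
    apply Rlt_le_trans with (exp 0); [apply exp_increasing | rewrite exp_0; lra].
    replace ((1 + ln (K - 1) / ln K) / 2 * - ln K) with (- (ln K + ln (K - 1)) / 2) by (field; lra).
    lra.
Qed.

Lemma geometric_cover_small K M D0 s delta eps : 2 <= K -> 0 <= M -> 0 < D0 ->
  (K - 1) * Rpower (/ K) s < 1 -> 0 < delta -> 0 < eps ->
  exists k, D0 * (/ K) ^ k < delta /\ (1 + M * (K - 1) ^ k) * Rpower (D0 * (/ K) ^ k) s <= eps.
Proof.
  intros HK HM HD0 Hgrowth Hdelta Heps.
  set (theta := Rpower (/ K) s) in *; assert (Htheta0 : 0 < theta) by apply Rpower_gt0.
  assert (Htheta1 : theta < 1) by nra.
  set (C := Rpower D0 s); assert (HC : 0 < C) by apply Rpower_gt0.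
  assert (HK1 : 0 <= / K < 1)
    by (split; [left; apply Rinv_0_lt_compat | rewrite <- Rinv_1; apply Rinv_lt_contravar]; lra).
  destruct (pow_lt1_eventually_small (/ K) D0 delta HK1 Hdelta) as [N1 HN1].
  destruct (pow_lt1_eventually_small ((K - 1) * theta) (C * M) (eps / 2)
              ltac:(split; [apply Rmult_le_pos|]; lra) ltac:(lra)) as [N2 HN2].
  destruct (pow_lt1_eventually_small theta C (eps / 2) ltac:(lra) ltac:(lra)) as [N3 HN3].
  set (k := (N1 + N2 + N3)%nat); exists k.
  specialize (HN1 k ltac:(lia)); specialize (HN2 k ltac:(lia)); specialize (HN3 k ltac:(lia)).
  split; [exact HN1|].
  rewrite <- Rpower_mult_distr, Rpower_pow_l
    by (try apply pow_lt; try apply Rinv_0_lt_compat; lra).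
  fold theta C; rewrite Rpow_mult_distr in HN2.
  replace ((1 + M * (K - 1) ^ k) * (C * theta ^ k))
    with (C * theta ^ k + C * M * ((K - 1) ^ k * theta ^ k)) by ring.
  lra.
Qed.

(** * Sequential compactness and isometric segments *)

Definition converges (u : nat -> pt) (l : pt) : Prop :=
  forall e, 0 < e -> exists N, forall k, (N <= k)%nat -> dist2 (u k) l < e.

Lemma strictly_increasing_ge (g : nat -> nat) :
  (forall k, (g k < g (S k))%nat) -> forall k, (k <= g k)%nat.
Proof. intros H k; induction k; [lia | specialize (H k); lia]. Qed.

Lemma strictly_increasing_lt (g : nat -> nat) :
  (forall k, (g k < g (S k))%nat) -> forall a b, (a < b)%nat -> (g a < g b)%nat.
Proof.
  intros H a b Hab; induction Hab as [|b Hab IH]; [apply H|].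
  specialize (H b); lia.
Qed.

Lemma converges_subseq u l g : converges u l -> (forall k, (g k < g (S k))%nat) ->
  converges (fun k => u (g k)) l.
Proof.
  intros H Hg e He; destruct (H e He) as [N HN]; exists N; intros k Hk.
  apply HN; pose proof (strictly_increasing_ge g Hg k); lia.
Qed.

Lemma dist2_limit u w U W D : converges u U -> converges w W ->
  (forall e, 0 < e -> exists N, forall k, (N <= k)%nat -> Rabs (dist2 (u k) (w k) - D) < e) ->
  dist2 U W = D.
Proof.
  intros Hu Hw HD; apply Req_of_Rabs_small; intros e He.
  destruct (Hu (e / 3)) as [N1 HN1]; [lra|]; destruct (Hw (e / 3)) as [N2 HN2]; [lra|].
  destruct (HD (e / 3)) as [N3 HN3]; [lra|].
  set (k := (N1 + N2 + N3)%nat).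
  specialize (HN1 k ltac:(lia)); specialize (HN2 k ltac:(lia)); specialize (HN3 k ltac:(lia)).
  pose proof (dist2_triangle U (u k) W); pose proof (dist2_triangle (u k) W (w k));
  pose proof (dist2_triangle (u k) U W); pose proof (dist2_triangle (u k) (w k) W).
  rewrite (dist2_sym U (u k)), (dist2_sym W (w k)) in *.
  apply Rabs_def2 in HN3; apply Rabs_def1; lra.
Qed.

Lemma converges_map (f : pt -> pt) u l :
  (forall p q, dist2 (f p) (f q) <= dist2 p q) -> converges u l ->
  converges (fun k => f (u k)) (f l).
Proof.
  intros Hf Hu e He; destruct (Hu e He) as [N HN]; exists N; intros k Hk.
  eapply Rle_lt_trans; [apply Hf | apply HN, Hk].
Qed.

Definition isometric_copy (F : pt -> Prop) (S : R -> Prop) (g : R -> pt) : Prop :=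
  (forall s, S s -> F (g s)) /\
  (forall s t, S s -> S t -> dist2 (g s) (g t) = Rabs (s - t)).

Definition contains_segment (F : pt -> Prop) (l : R) : Prop :=
  exists g, isometric_copy F (fun t => 0 <= t <= l) g.

Lemma contains_segment_le F l l' : contains_segment F l -> l' <= l -> contains_segment F l'.
Proof.
  intros [g [HF Hd]] Hl; exists g; split.
  - intros t Ht; apply HF; lra.
  - intros s t Hs Ht; apply Hd; lra.
Qed.

Lemma contains_segment_of_between F p q l : 0 < l -> dist2 p q = l ->
  (forall t, 0 <= t <= l -> exists y, F y /\ dist2 p y = t /\ dist2 y q = l - t) ->
  contains_segment F l.
Proof.
  intros Hl Hpq Hy.
  set (v := (fst q - fst p, snd q - snd p)).
  exists (fun t => line_pt p v (t / l)); split.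
  - intros t Ht; destruct (Hy t Ht) as [y [Fy [Hpy Hyq]]].
    assert (Hcol := dist2_between p y q ltac:(lra) ltac:(lra)).
    rewrite Hpy, Hpq in Hcol; rewrite Hcol in Fy; exact Fy.
  - intros s t _ _; rewrite dist2_line_pt.
    change (norm2 v) with (dist2 q p); rewrite dist2_sym, Hpq.
    replace (s / l - t / l) with ((s - t) * / l) by (field; lra).
    rewrite Rabs_mult, (Rabs_pos_eq (/ l)) by (left; apply Rinv_0_lt_compat, Hl).
    field; lra.
Qed.

Section SeqCompact.

Variable F : pt -> Prop.
Hypothesis HFc : seq_compact F.

Lemma seq_compact_subseq u : (forall k, F (u k)) ->
  exists g l, (forall k, (g k < g (S k))%nat) /\ F l /\ converges (fun k => u (g k)) l.
Proof. intros Hu; destruct (HFc u Hu) as (g & l & H); exists g, l; exact H. Qed.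

Lemma seq_compact_subseq2 u w : (forall k, F (u k)) -> (forall k, F (w k)) ->
  exists h p q, (forall k, (h k < h (S k))%nat) /\ F p /\ F q /\
    converges (fun k => u (h k)) p /\ converges (fun k => w (h k)) q.
Proof.
  intros Hu Hw.
  destruct (seq_compact_subseq u Hu) as (g1 & p & Hg1 & Fp & Hp).
  destruct (seq_compact_subseq (fun k => w (g1 k)) (fun k => Hw (g1 k)))
    as (g2 & q & Hg2 & Fq & Hq).
  exists (fun k => g1 (g2 k)), p, q; repeat split; auto.
  - intros k; apply (strictly_increasing_lt g1 Hg1), Hg2.
  - exact (converges_subseq _ _ _ Hp Hg2).
Qed.

Lemma seq_compact_bounded : exists B, 0 < B /\ forall p q, F p -> F q -> dist2 p q <= B.
Proof.
  destruct (classic (exists p0, F p0)) as [[p0 Hp0]|Hempty];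
    [| exists 1; split; [lra | intros p q Hp; exfalso; eauto]].
  assert (HB : exists B, forall q, F q -> dist2 q p0 <= B).
  { apply NNPP; intros Hunb.
    assert (Hfar : forall k : nat, exists q, F q /\ INR k < dist2 q p0).
    { intros k; apply NNPP; intros Hk; apply Hunb; exists (INR k); intros q Hq.
      apply Rnot_lt_le; intros Hlt; apply Hk; eauto. }
    destruct (functional_choice _ Hfar) as [u Hu].
    destruct (seq_compact_subseq u (fun k => proj1 (Hu k))) as (g & l & Hg & _ & Hc).
    destruct (Hc 1) as [N HN]; [lra|].
    destruct (INR_unbounded (dist2 l p0 + 1)) as [m Hm].
    set (k := (N + m)%nat); specialize (HN k ltac:(lia)).
    pose proof (proj2 (Hu (g k))); pose proof (strictly_increasing_ge g Hg k).
    assert (INR m <= INR (g k)) by (apply le_INR; lia).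
    pose proof (dist2_triangle (u (g k)) l p0); lra. }
  destruct HB as [B HB].
  exists (2 * Rabs B + 1); split; [pose proof (Rabs_pos B); lra|].
  intros p q Hp Hq; pose proof (HB p Hp); pose proof (HB q Hq); pose proof (Rle_abs B).
  pose proof (dist2_triangle p p0 q); rewrite (dist2_sym p0 q) in *; lra.
Qed.

Lemma seq_compact_line_bounded a v : v <> (0, 0) ->
  exists T, 0 < T /\ forall t, F (line_pt a v t) -> -T <= t <= T.
Proof.
  intros Hv; pose proof (norm2_gt0 v Hv) as Hnv.
  destruct seq_compact_bounded as [B [HB HBd]].
  destruct (classic (exists t1, F (line_pt a v t1))) as [[t1 Ht1]|Hno];
    [| exists 1; split; [lra | intros t Ht; exfalso; eauto]].
  exists (Rabs t1 + B / norm2 v + 1); split.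
  { pose proof (Rabs_pos t1); pose proof (Rdiv_lt_0_compat B (norm2 v) HB Hnv); lra. }
  intros t Ht; pose proof (HBd _ _ Ht Ht1) as Hd; rewrite dist2_line_pt in Hd.
  assert (Habs : Rabs (t - t1) <= B / norm2 v)
    by (apply (Rmult_le_reg_r (norm2 v)); [lra | unfold Rdiv; rewrite Rmult_assoc, Rinv_l; lra]).
  apply Rabs_le_inv in Habs; pose proof (Rabs_le_inv t1 _ (Rle_refl _)); lra.
Qed.

Lemma limit_point_at_distances (z u w : nat -> pt) p q a b :
  (forall k, F (z k)) -> converges u p -> converges w q ->
  (forall e, 0 < e -> exists N, forall k, (N <= k)%nat ->
     Rabs (dist2 (z k) (u k) - a) < e /\ Rabs (dist2 (z k) (w k) - b) < e) ->
  exists y, F y /\ dist2 y p = a /\ dist2 y q = b.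
Proof.
  intros Hz Hu Hw Happ.
  destruct (seq_compact_subseq z Hz) as (h & y & Hh & Fy & Hy).
  assert (Happ_h : forall e, 0 < e -> exists N, forall k, (N <= k)%nat ->
     Rabs (dist2 (z (h k)) (u (h k)) - a) < e /\ Rabs (dist2 (z (h k)) (w (h k)) - b) < e).
  { intros e He; destruct (Happ e He) as [N HN]; exists N; intros k Hk.
    apply HN; pose proof (strictly_increasing_ge h Hh k); lia. }
  exists y; split; [exact Fy | split].
  - apply (dist2_limit _ _ _ _ _ Hy (converges_subseq _ _ _ Hu Hh)).
    intros e He; destruct (Happ_h e He) as [N HN]; exists N; apply HN.
  - apply (dist2_limit _ _ _ _ _ Hy (converges_subseq _ _ _ Hw Hh)).
    intros e He; destruct (Happ_h e He) as [N HN]; exists N; apply HN.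
Qed.

End SeqCompact.

Definition isometric_copies_gap (F : pt -> Prop) (l c : R) : Prop :=
  forall A g, (forall s, A s -> 0 <= s <= l) -> isometric_copy F A g ->
  exists al, 0 <= al /\ al + c <= l /\ forall s, al <= s <= al + c -> ~ A s.

Section SeqCompactNoSegment.

Variable F : pt -> Prop.
Hypothesis HFc : seq_compact F.
Hypothesis HFseg : forall l, 0 < l -> ~ contains_segment F l.

Lemma segment_of_dense_copies l (A : nat -> R -> Prop) (g : nat -> R -> pt) : 0 < l ->
  (forall k s, A k s -> 0 <= s <= l) -> (forall k, isometric_copy F (A k) (g k)) ->
  (forall k al, 0 <= al -> al + l / INR (S k) <= l ->
     exists s, al <= s <= al + l / INR (S k) /\ A k s) ->
  contains_segment F l.
Proof.
  intros Hl HA Hcopy Hdense.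
  assert (Hnear : forall k t, 0 <= t <= l -> exists s, A k s /\ Rabs (s - t) <= l / INR (S k)).
  { intros k t; apply dense_window_approx, Hdense.
    rewrite S_INR; pose proof (pos_INR k); split; [apply Rdiv_lt_0_compat; lra|].
    apply (Rmult_le_reg_r (INR k + 1)); [lra|]; field_simplify; nra. }
  destruct (functional_choice _ (fun k => Hnear k 0 ltac:(lra))) as [a Ha].
  destruct (functional_choice _ (fun k => Hnear k l ltac:(lra))) as [b Hb].
  destruct (seq_compact_subseq2 F HFc (fun k => g k (a k)) (fun k => g k (b k)))
    as (h & p & q & Hh & Fp & Fq & Hp & Hq);
    [intros k; apply (Hcopy k), Ha | intros k; apply (Hcopy k), Hb |].
  assert (Hsmall : forall e, 0 < e ->
            exists N, forall k, (N <= k)%nat -> 2 * (l / INR (S (h k))) < e).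
  { intros e He; destruct (div_succ_small l (e / 2)) as [N HN]; [lra | lra |].
    exists N; intros k Hk; pose proof (strictly_increasing_ge h Hh k).
    specialize (HN (h k) ltac:(lia)); lra. }
  apply (contains_segment_of_between F p q l Hl).
  - apply (dist2_limit _ _ _ _ _ Hp Hq); intros e He.
    destruct (Hsmall e He) as [N HN]; exists N; intros k Hk.
    destruct (Ha (h k)) as [HSa Ha0], (Hb (h k)) as [HSb Hbl].
    rewrite (proj2 (Hcopy (h k))) by assumption.
    pose proof (Rabs_dist_approx _ _ _ _ _ Ha0 Hbl) as Happ.
    rewrite Rminus_0_l, Rabs_Ropp, (Rabs_pos_eq l) in Happ by lra.
    specialize (HN k Hk); lra.
  - intros t Ht; destruct (functional_choice _ (fun k => Hnear k t Ht)) as [s Hs].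
    destruct (limit_point_at_distances F HFc (fun k => g (h k) (s (h k))) _ _ p q t (l - t)
                (fun k => proj1 (Hcopy (h k)) _ (proj1 (Hs (h k)))) Hp Hq) as (y & Fy & Hyp & Hyq).
    + intros e He; destruct (Hsmall e He) as [N HN]; exists N; intros k Hk.
      destruct (Ha (h k)) as [HSa Ha0], (Hb (h k)) as [HSb Hbl], (Hs (h k)) as [HSs Hst].
      rewrite !(proj2 (Hcopy (h k))) by assumption.
      pose proof (Rabs_dist_approx _ _ _ _ _ Hst Ha0) as Happ1.
      pose proof (Rabs_dist_approx _ _ _ _ _ Hst Hbl) as Happ2.
      rewrite Rminus_0_r, (Rabs_pos_eq t) in Happ1 by lra.
      rewrite (Rabs_minus_sym t l), (Rabs_pos_eq (l - t)) in Happ2 by lra.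
      specialize (HN k Hk); split; lra.
    + exists y; split; [exact Fy|]; rewrite dist2_sym; split; assumption.
Qed.

Lemma seq_compact_uniform_gaps l : 0 < l -> exists c, 0 < c <= l /\ isometric_copies_gap F l c.
Proof.
  intros Hl; apply NNPP; intros Hno.
  assert (Hdense : forall k : nat, exists Sg : (R -> Prop) * (R -> pt),
     (forall s, fst Sg s -> 0 <= s <= l) /\ isometric_copy F (fst Sg) (snd Sg) /\
     forall al, 0 <= al -> al + l / INR (S k) <= l ->
       exists s, al <= s <= al + l / INR (S k) /\ fst Sg s).
  { intros k; apply NNPP; intros Hk; apply Hno; exists (l / INR (S k)); split.
    - rewrite S_INR; pose proof (pos_INR k); split; [apply Rdiv_lt_0_compat; lra|].
      apply (Rmult_le_reg_r (INR k + 1)); [lra|]; field_simplify; nra.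
    - intros A g HA Hg; apply NNPP; intros Hgap; apply Hk; exists (A, g); simpl.
      split; [exact HA | split; [exact Hg|]]; intros al Hal1 Hal2.
      apply NNPP; intros Hmiss; apply Hgap; exists al; split; [exact Hal1 | split; [exact Hal2|]].
      intros s Hs HSs; apply Hmiss; eauto. }
  destruct (functional_choice _ Hdense) as [Sg HSg].
  apply (HFseg l Hl), (segment_of_dense_copies l (fun k => fst (Sg k)) (fun k => snd (Sg k)) Hl);
    intros k; apply HSg.
Qed.

End SeqCompactNoSegment.

(** * Porous subsets of a line and Hausdorff dimension *)

Definition porous (E : R -> Prop) : Prop :=
  exists c rho0, 0 < c /\ 0 < rho0 /\ forall t0, E t0 -> forall rho, 0 < rho <= rho0 ->
  exists b, t0 - rho <= b /\ b + c * rho <= t0 + rho /\ forall t, b <= t <= b + c * rho -> ~ E t.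

(** [hausdorff_null] asks for infinitely many sets of positive size, so the finite cover is
    padded with empty sets of sizes [D 2^(-m)]. *)
Lemma hausdorff_null_of_covers s (A : pt -> Prop) : 0 < s ->
  (forall delta eps, 0 < delta -> 0 < eps ->
     exists (L : nat) (U : nat -> pt -> Prop) (D : R),
       0 < D <= delta /\ (1 + INR L) * Rpower D s <= eps /\
       (forall p, A p -> exists m, (m < L)%nat /\ U m p) /\
       (forall m p q, (m < L)%nat -> U m p -> U m q -> dist2 p q <= D)) ->
  hausdorff_null s A.
Proof.
  intros Hs Hcov delta eps Hdelta Heps.
  pose proof (Rpower_half_lt1 s Hs) as Hq; set (q := Rpower (1 / 2) s) in *.
  set (C := / (1 - q)); assert (HC : 0 < C) by (apply Rinv_0_lt_compat; lra).
  destruct (Hcov delta (eps / (1 + C)) Hdelta ltac:(apply Rdiv_lt_0_compat; lra))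
    as (L & U & D & [HD HDd] & HLD & Hcover & Hdiam).
  exists (fun m p => (m < L)%nat /\ U m p), (fun m => if Nat.ltb m L then D else D * (1 / 2) ^ m).
  split; [|split; [|split]].
  - intros p Hp; destruct (Hcover p Hp) as [m Hm]; exists m; exact Hm.
  - intros m; destruct (Nat.ltb m L); [lra|].
    assert (0 < (1 / 2) ^ m <= 1)
      by (split; [apply pow_lt; lra | rewrite <- (pow1 m) at 2; apply pow_incr; lra]).
    split; nra.
  - intros m p p' [Hm Hp] [_ Hp']; apply Nat.ltb_lt in Hm as Hm'; rewrite Hm'.
    apply Hdiam with m; assumption.
  - intros N; pose proof (Rpower_gt0 D s) as HDs.
    assert (Hterm : forall m, Rpower (if Nat.ltb m L then D else D * (1 / 2) ^ m) s
                              <= (if Nat.ltb m L then 1 else 0) * Rpower D s + q ^ m * Rpower D s).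
    { intros m; pose proof (pow_le q m ltac:(lra)); destruct (Nat.ltb m L); [nra|].
      rewrite <- Rpower_mult_distr, Rpower_pow_l by (try apply pow_lt; lra); unfold q; lra. }
    eapply Rle_trans; [apply sum_Rle; intros m _; apply Hterm|].
    rewrite plus_sum, <- !scal_sum.
    change (sum_f_R0 (pow q) N) with (sum_f_R0 (fun m => q ^ m) N).
    pose proof (sum_indicator_le L N).
    pose proof (sum_geom_le q N ltac:(lra)) as Hgeom; fold C in Hgeom.
    assert (HLs : INR L * Rpower D s <= eps / (1 + C)) by (pose proof (pos_INR L); nra).
    assert (HDs' : Rpower D s <= eps / (1 + C)) by (pose proof (pos_INR L); nra).
    apply Rle_trans with (INR L * Rpower D s + C * Rpower D s);
      [apply Rplus_le_compat; rewrite Rmult_comm; apply Rmult_le_compat_r; lra|].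
    replace eps with (eps / (1 + C) + C * (eps / (1 + C))) by (field; lra); nra.
Qed.

Lemma hausdorff_null_mono s (A B : pt -> Prop) :
  (forall p, A p -> B p) -> hausdorff_null s B -> hausdorff_null s A.
Proof.
  intros HAB HB delta eps Hdelta Heps.
  destruct (HB delta eps Hdelta Heps) as (U & d & Hcover & Hrest).
  exists U, d; split; [intros p Hp; apply Hcover, HAB, Hp | exact Hrest].
Qed.

Lemma hausdorff_dim_of_null (A : pt -> Prop) s : 0 <= s -> hausdorff_null s A ->
  exists d, is_hausdorff_dim A d /\ d <= s.
Proof.
  intros Hs Hnull.
  set (P := fun x => exists s', 0 <= s' /\ hausdorff_null s' A /\ x = - s').
  destruct (completeness P) as [m [Hub Hlub]].
  - exists 0; intros x [s' [Hs' [_ ->]]]; lra.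
  - exists (- s), s; auto.
  - exists (- m); split; [split|].
    + intros s' Hs' Hn'; assert (- s' <= m) by (apply Hub; exists s'; auto); lra.
    + intros e He; assert (m <= - e); [|lra].
      apply Hlub; intros x [s' [Hs' [Hn' ->]]]; specialize (He s' Hs' Hn'); lra.
    + assert (- s <= m) by (apply Hub; exists s; auto); lra.
Qed.

Section PorousSet.

Variable E : R -> Prop.

Lemma refine_interval_cover K h (l : list R) : (1 <= K)%nat -> 0 < h ->
  (forall x, exists j, (j < K)%nat /\
     forall t, x + INR j * (h / INR K) <= t <= x + INR (S j) * (h / INR K) -> ~ E t) ->
  exists l', (length l' <= (K - 1) * length l)%nat /\
  forall t, E t -> (exists x, In x l /\ x <= t <= x + h) ->
  exists x', In x' l' /\ x' <= t <= x' + h / INR K.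
Proof.
  intros HK Hh Hgap; assert (HKr : 0 < INR K) by (apply lt_0_INR; lia).
  induction l as [|x l IH].
  - exists nil; split; [simpl; lia | intros t _ [x [[] _]]].
  - destruct IH as [l1 [Hlen1 Hl1]]; destruct (Hgap x) as [j0 [Hj0 Hj0E]].
    set (idx := seq 0 j0 ++ seq (S j0) (K - S j0)).
    exists (map (fun j => x + INR j * (h / INR K)) idx ++ l1); split.
    { rewrite length_app, length_map; unfold idx; rewrite length_app, !length_seq; simpl; lia. }
    intros t Et [x' [[<-|Hin] Hx']].
    2: { destruct (Hl1 t Et) as [x'' [H1 H2]]; [exists x'; auto|].
         exists x''; split; [apply in_or_app|]; auto. }
    assert (HKh : INR (S (Nat.pred K)) * (h / INR K) = h)
      by (replace (S (Nat.pred K)) with K by lia; field; lra).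
    destruct (subdivision_locate x (h / INR K) (Nat.pred K) t) as [j [Hj Htj]];
      [apply Rdiv_lt_0_compat; lra | lra |].
    exists (x + INR j * (h / INR K)); split; [|rewrite S_INR in Htj; lra].
    apply in_or_app; left; apply (in_map (fun j => x + INR j * (h / INR K))); unfold idx.
    apply in_or_app; destruct (Nat.lt_ge_cases j j0);
      [left; apply in_seq; lia | right; apply in_seq].
    destruct (Nat.eq_dec j j0) as [->|]; [exfalso; exact (Hj0E t Htj Et) | lia].
Qed.

Hypothesis HEb : exists T, 0 < T /\ forall t, E t -> -T <= t <= T.
Hypothesis HEp : porous E.

(** Porosity at the points of [E] gives porosity of every short interval: its middle half
    either misses [E] or contains a point of [E] around which there is a gap. *)
Lemma porous_interval_gap : exists g l0, 0 < g <= 1 / 2 /\ 0 < l0 /\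
  forall x l, 0 < l <= l0 -> exists b, x <= b /\ b + g * l <= x + l /\
  forall t, b <= t <= b + g * l -> ~ E t.
Proof.
  destruct HEp as [c0 [rho0 [Hc0 [Hrho0 Hp]]]].
  exists (Rmin (c0 / 4) (1 / 2)), (4 * rho0).
  pose proof (Rmin_l (c0 / 4) (1 / 2)); pose proof (Rmin_r (c0 / 4) (1 / 2)).
  set (g := Rmin (c0 / 4) (1 / 2)) in *.
  assert (0 < g) by (apply Rmin_glb_lt; lra).
  split; [lra | split; [lra|]]; intros x l Hl.
  destruct (classic (exists t0, x + l / 4 <= t0 <= x + 3 * l / 4 /\ E t0)) as [[t0 [Ht0 Et0]]|Hno].
  - destruct (Hp t0 Et0 (l / 4) ltac:(lra)) as [b [Hb1 [Hb2 Hb3]]].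
    assert (g * l <= c0 * (l / 4)) by nra.
    exists b; split; [lra | split; [lra|]]; intros t Ht; apply Hb3; lra.
  - exists (x + l / 4); split; [lra | split; [nra|]].
    intros t Ht Et; apply Hno; exists t; split; [nra | exact Et].
Qed.

Lemma porous_subdivision_gap : exists K l0, (2 <= K)%nat /\ 0 < l0 /\
  forall x l, 0 < l <= l0 -> exists j, (j < K)%nat /\
  forall t, x + INR j * (l / INR K) <= t <= x + INR (S j) * (l / INR K) -> ~ E t.
Proof.
  destruct porous_interval_gap as [g [l0 [Hg [Hl0 Hp]]]].
  destruct (INR_unbounded (2 / g)) as [K0 HK0].
  set (K := Nat.max K0 2); exists K, l0; split; [lia | split; [exact Hl0|]].
  assert (HKg : 2 <= INR K * g).
  { assert (INR K0 <= INR K) by (apply le_INR; lia).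
    assert (2 / g * g = 2) by (field; lra); nra. }
  assert (HKp : 0 < INR K) by (apply lt_0_INR; lia).
  intros x l Hl; destruct (Hp x l Hl) as [b [H1 [H2 H3]]].
  set (h := l / INR K).
  assert (Hh : 0 < h) by (apply Rdiv_lt_0_compat; lra).
  assert (HKh : INR K * h = l) by (unfold h; field; lra).
  (* the gap has length at least [2 h], so it contains a whole piece *)
  assert (H2h : 2 * h <= g * l) by (rewrite <- HKh; nra).
  destruct (subdivision_locate x h (Nat.pred K) b Hh) as [j0 [Hj0 Hb]];
    [replace (S (Nat.pred K)) with K by lia; nra|].
  exists (S j0); split.
  - assert (INR (S (S j0)) <= INR K)
      by (apply (Rmult_le_reg_r h); [exact Hh | rewrite !S_INR in *; nra]).
    apply INR_le in H; lia.
  - intros t Ht; apply H3; rewrite !S_INR in *; nra.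
Qed.

Lemma porous_cover : exists K M lam, (2 <= K)%nat /\ 0 < lam /\ forall k, exists l : list R,
  (length l <= M * (K - 1) ^ k)%nat /\
  forall t, E t -> exists x, In x l /\ x <= t <= x + lam * (/ INR K) ^ k.
Proof.
  destruct porous_subdivision_gap as [K [l0 [HK [Hl0 Hch]]]].
  destruct HEb as [T [HT HTb]].
  destruct (INR_unbounded (2 * T / l0)) as [M HM].
  assert (HMp : (1 <= M)%nat).
  { destruct M; [|lia]; simpl in HM.
    assert (0 < 2 * T / l0) by (apply Rdiv_lt_0_compat; lra); lra. }
  assert (HMr : 0 < INR M) by (apply lt_0_INR; lia).
  assert (HKr : 1 < INR K) by (apply lt_1_INR; lia).
  set (lam := 2 * T / INR M).
  assert (Hlam : 0 < lam) by (apply Rdiv_lt_0_compat; lra).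
  assert (Hlam0 : lam <= l0).
  { apply (Rmult_le_reg_r (INR M)); [exact HMr|]; unfold lam, Rdiv.
    rewrite Rmult_assoc, Rinv_l, Rmult_1_r by lra.
    apply (Rmult_lt_compat_r l0) in HM; [|exact Hl0]; unfold Rdiv in HM.
    rewrite Rmult_assoc, Rinv_l, Rmult_1_r in HM by lra; lra. }
  exists K, M, lam; split; [exact HK | split; [exact Hlam|]].
  intros k; induction k as [|k IH].
  - exists (map (fun j => -T + INR j * lam) (seq 0 M)); split.
    { rewrite length_map, length_seq; simpl; lia. }
    intros t Et; destruct (HTb t Et).
    destruct (subdivision_locate (-T) lam (Nat.pred M) t Hlam) as [j [Hj Htj]].
    { replace (S (Nat.pred M)) with M by lia.
      replace (INR M * lam) with (2 * T) by (unfold lam; field; lra); lra. }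
    exists (-T + INR j * lam); split; [apply (in_map (fun j => -T + INR j * lam)), in_seq; lia|].
    rewrite S_INR in Htj; simpl; lra.
  - destruct IH as [l [Hlen Hl]].
    assert (Hpow : 0 < (/ INR K) ^ k <= 1).
    { split; [apply pow_lt, Rinv_0_lt_compat; lra|].
      rewrite <- (pow1 k); apply pow_incr; split; [left; apply Rinv_0_lt_compat; lra|].
      rewrite <- Rinv_1; apply Rinv_le_contravar; lra. }
    destruct (refine_interval_cover K (lam * (/ INR K) ^ k) l ltac:(lia) ltac:(nra))
      as [l' [Hlen' Hl']].
    { intros x; apply Hch; nra. }
    exists l'; split; [simpl; pose proof (Nat.mul_le_mono_l _ _ (K - 1) Hlen); nia|].
    intros t Et; destruct (Hl' t Et (Hl t Et)) as [x' [Hx' Ht]]; exists x'; split; [exact Hx'|].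
    replace (lam * (/ INR K) ^ S k) with (lam * (/ INR K) ^ k / INR K) by (simpl; field; lra); lra.
Qed.

Lemma porous_line_null a v : v <> (0, 0) ->
  exists s, 0 < s < 1 /\ hausdorff_null s (fun p => exists t, E t /\ p = line_pt a v t).
Proof.
  intros Hv; pose proof (norm2_gt0 v Hv) as Hnv.
  destruct porous_cover as [K [M [lam [HK [Hlam Hcov]]]]].
  assert (HKr : 2 <= INR K) by (replace 2 with (INR 2) by (simpl; ring); apply le_INR, HK).
  destruct (subdivision_exponent (INR K) HKr) as [s [Hs Hgrowth]].
  exists s; split; [exact Hs|].
  apply hausdorff_null_of_covers; [lra|]; intros delta eps Hdelta Heps.
  destruct (geometric_cover_small (INR K) (INR M) (lam * norm2 v) s delta eps HKr (pos_INR M)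
              (Rmult_lt_0_compat _ _ Hlam Hnv) Hgrowth Hdelta Heps) as [k [Hkdelta Hkeps]].
  destruct (Hcov k) as [l [Hlen Hl]].
  set (h := lam * (/ INR K) ^ k) in *.
  assert (Hh : 0 < h) by (apply Rmult_lt_0_compat; [lra | apply pow_lt, Rinv_0_lt_compat; lra]).
  assert (HD : h * norm2 v = lam * norm2 v * (/ INR K) ^ k) by (unfold h; ring).
  exists (length l), (fun m p => exists t, nth m l 0 <= t <= nth m l 0 + h /\ p = line_pt a v t),
    (h * norm2 v); split; [|split; [|split]].
  - split; [nra | lra].
  - assert (HL : INR (length l) <= INR M * (INR K - 1) ^ k).
    { apply Rle_trans with (INR (M * (K - 1) ^ k)); [apply le_INR, Hlen|].
      rewrite mult_INR, pow_INR, minus_INR by lia; simpl; lra. }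
    rewrite HD; eapply Rle_trans; [|exact Hkeps].
    apply Rmult_le_compat_r; [left; apply Rpower_gt0 | lra].
  - intros p [t [Et ->]]; destruct (Hl t Et) as [x [Hx Hxt]].
    destruct (In_nth l x 0 Hx) as [m [Hm <-]]; exists m; split; [exact Hm|]; exists t; auto.
  - intros m p p' _ [t [Ht ->]] [t' [Ht' ->]]; rewrite dist2_line_pt.
    apply Rmult_le_compat_r; [lra|]; apply Rabs_le; lra.
Qed.

End PorousSet.

(** * Self-similar sets under the strong separation condition *)

Section Attractor.

Variable n : nat.
Variable phi : nat -> pt -> pt.
Variable r : nat -> R.
Variable F : pt -> Prop.
Hypothesis Hsim : forall i, (i < n)%nat -> contracting_similarity (phi i) (r i).
Hypothesis HF : is_attractor n phi F.
Hypothesis Hssc : SSC n phi F.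

Lemma phi_dist i p q : (i < n)%nat -> dist2 (phi i p) (phi i q) = r i * dist2 p q.
Proof. intros Hi; apply (Hsim i Hi). Qed.

Lemma ratio_bounds i : (i < n)%nat -> 0 < r i < 1.
Proof. intros Hi; apply (Hsim i Hi). Qed.

Lemma phi_dist_le i : (i < n)%nat -> forall p q, dist2 (phi i p) (phi i q) <= dist2 p q.
Proof.
  intros Hi p q; rewrite phi_dist by exact Hi.
  pose proof (ratio_bounds i Hi); pose proof (dist2_ge0 p q); nra.
Qed.

Lemma attractor_phi i p : (i < n)%nat -> F p -> F (phi i p).
Proof. intros Hi Hp; apply (proj2 (proj2 HF)); eauto. Qed.

Lemma attractor_cylinder p : F p -> exists i, (i < n)%nat /\ exists q, F q /\ p = phi i q.
Proof. apply (proj2 (proj2 HF)). Qed.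

Lemma attractor_compact : seq_compact F.
Proof. apply HF. Qed.

Lemma ratio_lower : exists rm, 0 < rm < 1 /\ forall i, (i < n)%nat -> rm <= r i.
Proof.
  destruct (uniform_pos_bound (fun i d => d <= r i) n) as [d [Hd H]].
  - intros; lra.
  - intros i Hi; exists (r i); pose proof (ratio_bounds i Hi); split; lra.
  - exists (Rmin d (1 / 2)); pose proof (Rmin_l d (1 / 2)); pose proof (Rmin_r d (1 / 2)).
    split; [split; [apply Rmin_glb_lt|]; lra|].
    intros i Hi; specialize (H i Hi); lra.
Qed.

Lemma ratio_upper : exists rM, 0 < rM < 1 /\ forall i, (i < n)%nat -> r i <= rM.
Proof.
  destruct (uniform_pos_bound (fun i e => r i <= 1 - e) n) as [e [He H]].
  - intros; lra.
  - intros i Hi; exists (1 - r i); pose proof (ratio_bounds i Hi); split; lra.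
  - exists (Rmax (1 - e) (1 / 2)); pose proof (Rmax_l (1 - e) (1 / 2));
      pose proof (Rmax_r (1 - e) (1 / 2)).
    split; [split; [lra | apply Rmax_lub_lt; lra]|].
    intros i Hi; specialize (H i Hi); lra.
Qed.

Definition cylinders_separated (d : R) : Prop :=
  forall i j, (i < n)%nat -> (j < n)%nat -> i <> j ->
  forall p q, F p -> F q -> d <= dist2 (phi i p) (phi j q).

(** Compactness upgrades the disjointness of the first-level cylinders to a positive gap. *)
Lemma cylinder_pair_gap i j : (i < n)%nat -> (j < n)%nat -> i <> j ->
  exists d, 0 < d /\ forall p q, F p -> F q -> d <= dist2 (phi i p) (phi j q).
Proof.
  intros Hi Hj Hij; apply NNPP; intros Hno.
  assert (Hclose : forall k : nat, exists pq : pt * pt, F (fst pq) /\ F (snd pq) /\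
            dist2 (phi i (fst pq)) (phi j (snd pq)) < 1 / INR (S k)).
  { intros k; apply NNPP; intros Hk; apply Hno; exists (1 / INR (S k)); split.
    - apply Rdiv_lt_0_compat; [lra | apply lt_0_INR; lia].
    - intros p q Hp Hq; apply Rnot_lt_le; intros Hlt; apply Hk; exists (p, q); auto. }
  destruct (functional_choice _ Hclose) as [u Hu].
  destruct (seq_compact_subseq2 F attractor_compact (fun k => fst (u k)) (fun k => snd (u k)))
    as (h & p & q & Hh & Fp & Fq & Hp & Hq); [apply Hu | apply Hu |].
  apply (Hssc i j Hi Hj Hij p q Fp Fq), dist2_eq0.
  apply (dist2_limit _ _ _ _ _ (converges_map _ _ _ (phi_dist_le i Hi) Hp)
           (converges_map _ _ _ (phi_dist_le j Hj) Hq)).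
  intros e He; destruct (div_succ_small 1 e) as [N HN]; [lra | exact He |]; exists N; intros k Hk.
  destruct (Hu (h k)) as (_ & _ & Hd).
  pose proof (dist2_ge0 (phi i (fst (u (h k)))) (phi j (snd (u (h k))))).
  specialize (HN (h k) ltac:(pose proof (strictly_increasing_ge h Hh k); lia)).
  rewrite Rminus_0_r, Rabs_pos_eq by lra; lra.
Qed.

Lemma cylinder_gap : exists d, 0 < d /\ cylinders_separated d.
Proof.
  destruct (uniform_pos_bound (fun i d => (i < n)%nat -> forall j, (j < n)%nat -> i <> j ->
     forall p q, F p -> F q -> d <= dist2 (phi i p) (phi j q)) n) as [d [Hd H]].
  - intros i d d' H1 H2 Hi j Hj Hij p q Hp Hq; specialize (H1 Hi j Hj Hij p q Hp Hq); lra.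
  - intros i Hi.
    destruct (uniform_pos_bound (fun j d => i <> j -> forall p q, F p -> F q ->
       d <= dist2 (phi i p) (phi j q)) n) as [d [Hd H]].
    + intros j d d' H1 H2 Hij p q Hp Hq; specialize (H1 Hij p q Hp Hq); lra.
    + intros j Hj; destruct (Nat.eq_dec i j) as [|Hij].
      * exists 1; split; [lra | intros; contradiction].
      * destruct (cylinder_pair_gap i j Hi Hj Hij) as [d [Hd H]]; exists d; auto.
    + exists d; split; [exact Hd|]; intros _ j Hj Hij; apply H; assumption.
  - exists d; split; [exact Hd|]; intros i j Hi Hj Hij; apply H; assumption.
Qed.

(** A segment cannot jump across the gap [d] in steps of length [d/2]. *)
Lemma segment_in_one_cylinder l g i :
  isometric_copy F (fun t => 0 <= t <= l) g -> (i < n)%nat ->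
  (exists y, F y /\ g 0 = phi i y) ->
  forall t, 0 <= t <= l -> exists y, F y /\ g t = phi i y.
Proof.
  intros [Hg Hgd] Hi H0.
  destruct cylinder_gap as [d [Hd Hsep]].
  assert (Hstep : forall m : nat, forall t, 0 <= t <= l -> t <= INR m * (d / 2) ->
            exists y, F y /\ g t = phi i y).
  { induction m as [|m IH]; intros t Ht Htm.
    - simpl in Htm; replace t with 0 by lra; exact H0.
    - rewrite S_INR in Htm; pose proof (pos_INR m).
      destruct (Rle_dec t (INR m * (d / 2))) as [Hle|Hgt]; [apply IH; auto|].
      destruct (IH (INR m * (d / 2))) as [y' [Hy' E']]; [split; nra | lra |].
      destruct (attractor_cylinder (g t) (Hg t Ht)) as [j [Hj [z [Hz Ez]]]].
      destruct (Nat.eq_dec j i) as [->|Hji]; [eauto|].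
      exfalso; specialize (Hsep i j Hi Hj (not_eq_sym Hji) y' z Hy' Hz).
      rewrite <- E', <- Ez, Hgd, Rabs_left1 in Hsep by first [split; nra | nra]; lra. }
  intros t Ht; destruct (INR_unbounded (l / (d / 2))) as [m Hm].
  apply (Hstep m t Ht).
  apply (Rmult_lt_compat_r (d / 2)) in Hm; [|lra]; field_simplify in Hm; lra.
Qed.

Lemma segment_rescale l : 0 <= l -> contains_segment F l ->
  exists i, (i < n)%nat /\ contains_segment F (l / r i).
Proof.
  intros Hl [g Hg].
  destruct (attractor_cylinder (g 0)) as [i [Hi Hy0]]; [apply Hg; lra|].
  pose proof (segment_in_one_cylinder l g i Hg Hi Hy0) as Hcyl.
  pose proof (ratio_bounds i Hi) as Hri.
  assert (Hscale : forall t, 0 <= t <= l / r i -> 0 <= r i * t <= l).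
  { intros t [Ht1 Ht2]; split; [nra|].
    apply (Rmult_le_compat_l (r i)) in Ht2; [|lra].
    replace (r i * (l / r i)) with l in Ht2 by (field; lra); exact Ht2. }
  destruct (partial_choice (0, 0) (fun t => 0 <= t <= l / r i)
              (fun t y => F y /\ g (r i * t) = phi i y)) as [h Hh];
    [intros t Ht; apply Hcyl, Hscale, Ht|].
  exists i; split; [exact Hi|]; exists h; split.
  - intros t Ht; apply Hh, Ht.
  - intros s t Hs Ht; destruct (Hh s Hs) as [_ Es], (Hh t Ht) as [_ Et].
    apply (Rmult_eq_reg_l (r i)); [|lra].
    rewrite <- phi_dist, <- Es, <- Et, (proj2 Hg) by (try apply Hscale; assumption).
    replace (r i * s - r i * t) with (r i * (s - t)) by ring.
    rewrite Rabs_mult, (Rabs_pos_eq (r i)); lra.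
Qed.

(** Blowing a segment up through its cylinder again and again exceeds the diameter of [F]. *)
Lemma attractor_no_segment l : 0 < l -> ~ contains_segment F l.
Proof.
  intros Hl HS.
  destruct ratio_upper as [rM [HrM HrMi]].
  set (x := / rM - 1).
  assert (Hx : 0 < x).
  { unfold x; assert (1 < / rM) by (rewrite <- Rinv_1; apply Rinv_lt_contravar; lra); lra. }
  assert (Hgrow : forall m, contains_segment F (l * (1 + x) ^ m)).
  { induction m as [|m IH]; [simpl; rewrite Rmult_1_r; exact HS|].
    assert (Hpos : 0 < l * (1 + x) ^ m) by (apply Rmult_lt_0_compat; [lra | apply pow_lt; lra]).
    destruct (segment_rescale _ (Rlt_le _ _ Hpos) IH) as [i [Hi HSi]].
    apply (contains_segment_le _ _ _ HSi).
    pose proof (HrMi i Hi); pose proof (ratio_bounds i Hi).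
    replace (l * (1 + x) ^ S m) with (l * (1 + x) ^ m / rM) by (unfold x; simpl; field; lra).
    apply Rmult_le_compat_l; [lra | apply Rinv_le_contravar; lra]. }
  destruct (seq_compact_bounded F attractor_compact) as [B [HB HBd]].
  destruct (INR_unbounded (B / (l * x))) as [m Hm].
  destruct (Hgrow m) as [g [Hg Hgd]].
  set (L := l * (1 + x) ^ m) in *.
  assert (HL : B < L).
  { pose proof (poly m x Hx).
    apply (Rmult_lt_compat_r (l * x)) in Hm; [|nra]; field_simplify in Hm; [|lra].
    unfold L; nra. }
  pose proof (HBd (g 0) (g L) (Hg 0 ltac:(lra)) (Hg L ltac:(lra))).
  rewrite Hgd, Rabs_left1 in H by lra; lra.
Qed.

Fixpoint word_map (w : list nat) (p : pt) : pt :=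
  match w with nil => p | i :: w' => phi i (word_map w' p) end.

Fixpoint word_ratio (w : list nat) : R :=
  match w with nil => 1 | i :: w' => r i * word_ratio w' end.

Definition word_valid (w : list nat) : Prop := Forall (fun i => (i < n)%nat) w.

Lemma word_map_dist w p q : word_valid w ->
  dist2 (word_map w p) (word_map w q) = word_ratio w * dist2 p q.
Proof.
  induction w as [|i w IH]; intros Hw; simpl; [ring|].
  inversion Hw; subst; rewrite phi_dist, IH by assumption; ring.
Qed.

Lemma word_ratio_bounds w : word_valid w -> 0 < word_ratio w <= 1.
Proof.
  induction w as [|i w IH]; intros Hw; simpl; [lra|].
  inversion Hw as [|? ? Hi Hw']; subst.
  destruct (IH Hw'); pose proof (ratio_bounds i Hi); split; nra.
Qed.

Lemma attractor_word_map w p : word_valid w -> F p -> F (word_map w p).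
Proof.
  induction w as [|i w IH]; intros Hw Hp; simpl; [exact Hp|].
  inversion Hw; subst; apply attractor_phi; auto.
Qed.

Lemma cylinder_near d : 0 < d -> cylinders_separated d ->
  forall w, word_valid w -> forall y z, F y -> F z ->
  dist2 (word_map w y) z < word_ratio w * d -> exists y', F y' /\ z = word_map w y'.
Proof.
  intros Hd Hsep w; induction w as [|i w IH]; intros Hw y z Hy Hz Hdz; [exists z; auto|].
  inversion Hw as [|? ? Hi Hw']; subst; simpl in Hdz.
  destruct (attractor_cylinder z Hz) as [j [Hj [z1 [Hz1 ->]]]].
  destruct (word_ratio_bounds w Hw'); pose proof (ratio_bounds i Hi).
  destruct (Nat.eq_dec i j) as [<-|Hij].
  - rewrite phi_dist in Hdz by exact Hi.
    destruct (IH Hw' y z1 Hy Hz1) as [y' [Hy' ->]]; [apply (Rmult_lt_reg_l (r i)); lra|].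
    exists y'; split; [exact Hy' | reflexivity].
  - exfalso; pose proof (Hsep i j Hi Hj Hij _ z1 (attractor_word_map w y Hw' Hy) Hz1).
    assert (r i * word_ratio w <= 1) by nra; nra.
Qed.

Lemma cylinder_of_ratio : exists rm, 0 < rm /\ forall x, F x -> forall rho, 0 < rho <= 1 ->
  exists w, word_valid w /\ (exists y, F y /\ x = word_map w y) /\ rm * rho < word_ratio w <= rho.
Proof.
  destruct ratio_lower as [rm [Hrm Hrmi]], ratio_upper as [rM [HrM HrMi]].
  exists rm; split; [lra|].
  assert (Hm : forall m x, F x -> forall rho, rM ^ m < rho <= 1 ->
    exists w, word_valid w /\ (exists y, F y /\ x = word_map w y) /\
              rm * rho < word_ratio w <= rho).
  { induction m as [|m IH]; intros x Hx rho Hrho; [simpl in Hrho; lra|].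
    destruct (Req_dec rho 1) as [->|Hne].
    { exists nil; split; [constructor | split; [exists x; auto | simpl; lra]]. }
    destruct (attractor_cylinder x Hx) as [i [Hi [x1 [Hx1 ->]]]].
    pose proof (ratio_bounds i Hi); pose proof (Hrmi i Hi); pose proof (HrMi i Hi).
    destruct (Rlt_dec (r i) rho).
    - exists (i :: nil); split; [constructor; auto|]; split; [exists x1; auto|]; simpl.
      assert (rm * rho < rm) by nra; nra.
    - destruct (IH x1 Hx1 (rho / r i)) as [w [Hw [[y [Hy ->]] Hr]]].
      + simpl in Hrho; pose proof (pow_lt rM m ltac:(lra)); split.
        * apply (Rmult_lt_reg_r (r i)); [lra|]; unfold Rdiv; rewrite Rmult_assoc, Rinv_l; nra.
        * apply (Rmult_le_reg_r (r i)); [lra|]; unfold Rdiv; rewrite Rmult_assoc, Rinv_l; lra.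
      + exists (i :: w); split; [constructor; auto|]; split; [exists y; auto|]; simpl.
        destruct Hr as [Hr1 Hr2].
        apply (Rmult_lt_compat_l (r i)) in Hr1; [|lra].
        apply (Rmult_le_compat_l (r i)) in Hr2; [|lra].
        replace (r i * (rm * (rho / r i))) with (rm * rho) in Hr1 by (field; lra).
        replace (r i * (rho / r i)) with rho in Hr2 by (field; lra); lra. }
  intros x Hx rho Hrho.
  destruct (pow_lt_1_zero rM ltac:(rewrite Rabs_pos_eq; lra) rho ltac:(lra)) as [m Hpow].
  specialize (Hpow m (le_n m)); rewrite Rabs_pos_eq in Hpow by (left; apply pow_lt; lra).
  apply (Hm m x Hx); lra.
Qed.

(** Pulling back through the cylinder map turns a window of the line around [word_map w y]
    into an isometric copy in [F], which has a gap of relative size [c]. *)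
Lemma line_gap_near_cylinder a v d c w y t0 : v <> (0, 0) -> 0 < d ->
  cylinders_separated d -> isometric_copies_gap F d c ->
  word_valid w -> F y -> line_pt a v t0 = word_map w y ->
  exists al, 0 <= al /\ al + c <= d /\ forall tau, al <= tau <= al + c ->
    ~ F (line_pt a v (t0 + (tau - d / 2) * (word_ratio w / norm2 v))).
Proof.
  intros Hv Hd Hsep Hgap Hw Hy Ht0.
  pose proof (norm2_gt0 v Hv) as Hnv; destruct (word_ratio_bounds w Hw) as [HR0 _].
  set (u := word_ratio w / norm2 v).
  assert (Hu : 0 < u) by (apply Rdiv_lt_0_compat; assumption).
  assert (Hline : forall s t,
            dist2 (line_pt a v (t0 + (s - d / 2) * u)) (line_pt a v (t0 + (t - d / 2) * u))
                             = Rabs (s - t) * word_ratio w).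
  { intros s t; rewrite dist2_line_pt.
    replace (t0 + (s - d / 2) * u - (t0 + (t - d / 2) * u)) with ((s - t) * u) by ring.
    rewrite Rabs_mult, (Rabs_pos_eq u) by lra; unfold u; field; lra. }
  set (A := fun tau => 0 <= tau <= d /\ F (line_pt a v (t0 + (tau - d / 2) * u))).
  destruct (partial_choice (0, 0) A
              (fun tau y' => F y' /\ line_pt a v (t0 + (tau - d / 2) * u) = word_map w y'))
    as [g Hg].
  { intros tau [Htau Hf]; apply (cylinder_near d Hd Hsep w Hw y _ Hy Hf).
    rewrite <- Ht0; replace t0 with (t0 + (d / 2 - d / 2) * u) at 1 by ring; rewrite Hline.
    assert (Rabs (d / 2 - tau) <= d / 2) by (apply Rabs_le; lra); nra. }
  destruct (Hgap A g) as [al [Hal1 [Hal2 Hal]]].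
  - intros s Hs; apply Hs.
  - split; [intros s Hs; apply Hg, Hs|].
    intros s t Hs Ht; destruct (Hg s Hs) as [_ Es], (Hg t Ht) as [_ Et].
    apply (Rmult_eq_reg_l (word_ratio w)); [|lra].
    rewrite <- word_map_dist, <- Es, <- Et, Hline by (apply Hsim || exact Hw); ring.
  - exists al; split; [exact Hal1 | split; [exact Hal2|]].
    intros tau Htau HFt; apply (Hal tau Htau); split; [lra | exact HFt].
Qed.

Lemma attractor_line_porous a v : v <> (0, 0) -> porous (fun t => F (line_pt a v t)).
Proof.
  intros Hv; pose proof (norm2_gt0 v Hv) as Hnv.
  destruct (cylinder_gap) as [d [Hd Hsep]].
  destruct (seq_compact_uniform_gaps F attractor_compact
              attractor_no_segment d Hd) as [c [Hc Hgap]].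
  destruct (cylinder_of_ratio) as [rm [Hrm Hcyl]].
  exists (2 * c * rm / d), (d / 2 / norm2 v); split; [apply Rdiv_lt_0_compat; nra|].
  split; [apply Rdiv_lt_0_compat; lra|].
  intros t0 Ht0 rho Hrho.
  (* at scale [rho'] the window of half-width [d/2] around [t0] has radius at most [rho] *)
  set (rho' := rho * norm2 v / (d / 2)).
  assert (Hrho' : 0 < rho' <= 1).
  { unfold rho'; split; [apply Rdiv_lt_0_compat; nra|].
    apply (Rmult_le_reg_r (d / 2)); [lra|]; destruct Hrho as [_ Hrho].
    apply (Rmult_le_compat_r (norm2 v)) in Hrho; [|lra].
    replace (d / 2 / norm2 v * norm2 v) with (d / 2) in Hrho by (field; lra).
    field_simplify; lra. }
  destruct (Hcyl _ Ht0 rho' Hrho') as [w [Hw [[y [Hy Ey]] [HR1 HR2]]]].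
  destruct (line_gap_near_cylinder a v d c w y t0 Hv Hd Hsep Hgap Hw Hy Ey)
    as [al [Hal1 [Hal2 Hal]]].
  set (u := word_ratio w / norm2 v) in *.
  assert (Hu : c * rm * rho' / norm2 v < c * u /\ d / 2 * u <= rho).
  { unfold u; split.
    - replace (c * (word_ratio w / norm2 v)) with (c * word_ratio w / norm2 v) by (field; lra).
      unfold Rdiv; apply Rmult_lt_compat_r; [apply Rinv_0_lt_compat; lra | nra].
    - replace rho with (d / 2 * (rho' / norm2 v)) by (unfold rho'; field; lra).
      apply Rmult_le_compat_l; [lra|]; unfold Rdiv.
      apply Rmult_le_compat_r; [left; apply Rinv_0_lt_compat|]; lra. }
  assert (Hcrho : 2 * c * rm / d * rho = c * rm * rho' / norm2 v) by (unfold rho'; field; lra).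
  destruct (word_ratio_bounds w Hw) as [HR0 _].
  assert (Hu0 : 0 < u) by (apply Rdiv_lt_0_compat; lra).
  exists (t0 + (al - d / 2) * u); split; [nra | split; [nra|]].
  intros t Ht; replace t with (t0 + ((t - t0) / u + d / 2 - d / 2) * u) by (field; lra).
  apply Hal; split.
  - apply (Rmult_le_reg_r u); [lra|]; field_simplify; nra.
  - apply (Rmult_le_reg_r u); [lra|]; field_simplify; nra.
Qed.

End Attractor.

Theorem corollary3p2 (n : nat) (phi : nat -> pt -> pt) (r : nat -> R) (F : pt -> Prop)
  (Hn : (1 <= n)%nat)
  (Hsim : forall i, (i < n)%nat -> contracting_similarity (phi i) (r i))
  (HF : is_attractor n phi F)
  (Hssc : SSC n phi F) :
  forall a v : pt, v <> (0, 0) ->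
  exists d, is_hausdorff_dim (fun p => F p /\ affine_line a v p) d /\ d < 1.
Proof.
  intros a v Hv.
  set (E := fun t => F (line_pt a v t)).
  pose proof (seq_compact_line_bounded F (attractor_compact n phi F HF) a v Hv) as HEb.
  pose proof (attractor_line_porous n phi r F Hsim HF Hssc a v Hv) as HEp.
  destruct (porous_line_null E HEb HEp a v Hv) as [s [Hs Hnull]].
  assert (Hsub : forall p, F p /\ affine_line a v p -> exists t, E t /\ p = line_pt a v t)
    by (intros p [Fp [t ->]]; exists t; split; [exact Fp | reflexivity]).
  destruct (hausdorff_dim_of_null _ s ltac:(lra) (hausdorff_null_mono s _ _ Hsub Hnull))
    as [d [Hd Hds]].
  exists d; split; [exact Hd | lra].
Qed.
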